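(* Let $n,m$ be positive integers, $\xi_m=e^{2\pi\sqrt{-1}/m}$, and $Q$ an integer valued positive definite quadratic form on $\mathbb{Z}^n$. Set \[ \Theta_{Q,m}(q)=\sum_{(k_1,\dots,k_n)\in\mathbb{Z}^n}q^{Q(k_1,\dots,k_n)}\xi_m^{k_1}. \] Suppose that $\Theta_{Q,m}(q)$ is unchanged when $\xi_m$ is replaced by $g(\xi_m)$, for every $g\in\mathrm{Gal}(\mathbb{Q}(\xi_m)/\mathbb{Q})$. Then $\Theta_{Q,m}(q)$ is a $\mathbb{Q}$-linear combination of theta series $\Theta_{Q'}(q)=\sum_{k\in\mathbb{Z}^n}q^{Q'(k)}$ of integer valued positive definite quadratic forms $Q'$ on $\mathbb{Z}^n$.
   Context: An integer valued positive definite quadratic form on $\mathbb{Z}^n$ is a quadratic form taking integer values on $\mathbb{Z}^n$ and positive definite over $\mathbb{R}$. The series are formal power series in $q$ with coefficients in $\mathbb{Q}(\xi_m)$, and $g$ acts on coefficients. *)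

From HB Require Import structures.
From mathcomp Require Import all_boot all_order all_algebra all_field.
From mathcomp Require Import boolp classical_sets fsbigop.
From mathcomp Require Import Rstruct.
From Stdlib Require Import Reals.
Set Implicit Arguments. Unset Strict Implicit. Unset Printing Implicit Defensive.
Import Order.TTheory GRing.Theory Num.Theory.
Local Open Scope ring_scope.
Local Open Scope classical_set_scope.

(* An integer valued quadratic form on Z^n, given by integer coefficients:
   Q(k) = sum_{i,j} A i j k_i k_j  (every integer valued form is of this shape,
   e.g. with A upper triangular). *)
Definition qf (n : nat) (A : 'M[int]_n) (k : 'rV[int]_n) : int :=
  \sum_(i < n) \sum_(j < n) A i j * k 0 i * k 0 j.

Definition posdef (n : nat) (A : 'M[int]_n) : Prop :=
  forall x : 'rV[Rdefinitions.R]_n, x != 0 ->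
    0 < \sum_(i < n) \sum_(j < n) (A i j)%:~R * x 0 i * x 0 j.

(* xi_m = e^{2 pi i / m}: m.-root (-1) is e^{i pi / m} (minimal argument root) *)
Definition xi (m : nat) : algC := (m.-root (-1)) ^+ 2.

(* N-th coefficient of sum_{k in Z^n} q^{Q(k)} z^{k_{i0}}
   (a finite sum when Q is positive definite). *)
Definition theta_coef (n : nat) (A : 'M[int]_n) (i0 : 'I_n) (z : algC) (N : nat)
  : algC :=
  \sum_(k \in [set k : 'rV[int]_n | qf A k = N%:Z]) z ^ (k 0 i0).

(* Galois invariance lets one replace xi by the average of z ^+ r over the r
   coprime to the order m of xi, so that the k-th term of the series is
   weighted by the Ramanujan sum c_m(k_1).  By inclusion-exclusion over the
   primes dividing m, c_m(j) is an integer combination of the functions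
   j |-> d [d | j] for divisors d of m.  Finally, summing [d | k_1] over the
   vectors k with Q(k) = N counts the vectors of the rescaled form
   k |-> Q(d k_1, k_2, ..., k_n) of value N, and that form is again integer
   valued and positive definite.  Level sets of Q are finite because, by
   Cauchy-Schwarz for the polar form of Q with the vector dual to the i-th
   coordinate, x_i ^ 2 <= c Q(x). *)

From HB Require Import structures.
From mathcomp Require Import all_boot all_order all_algebra all_field.
From mathcomp Require Import boolp classical_sets fsbigop cardinality Rstruct.
From mathcomp Require Import ring zify.

Set Implicit Arguments.
Unset Strict Implicit.
Unset Printing Implicit Defensive.
Import Order.TTheory GRing.Theory Num.Theory.
Local Open Scope ring_scope.
Local Open Scope classical_set_scope.

Lemma finite_int_box (n M : nat) :
  finite_set [set k : 'rV[int]_n | forall i, `|k 0 i| < M%:Z].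
Proof.
pose g (f : {ffun 'I_n -> 'I_(2 * M).+1}) : 'rV[int]_n :=
  \row_i ((f i : nat)%:Z - M%:Z).
apply: (sub_finite_set _ (finite_image g (@finite_finset _ setT))) => k /= hk.
exists [ffun i => inord (absz (k 0 i + M%:Z))] => //.
apply/rowP => i; rewrite !mxE ffunE.
have := hk i; rewrite ltr_norml => /andP[kl kr].
rewrite inordK; last by lia.
by rewrite gez0_abs; lia.
Qed.

Section PosdefLevelSets.
Local Notation RR := Rdefinitions.R.
Variables (n : nat) (A : 'M[int]_n).

Definition qfR (x : 'rV[RR]_n) : RR :=
  \sum_(i < n) \sum_(j < n) (A i j)%:~R * x 0 i * x 0 j.

Definition polar_mx : 'M[RR]_n := \matrix_(i, j) ((A i j)%:~R + (A j i)%:~R).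

Definition polar (u v : 'rV[RR]_n) : RR :=
  \sum_(i < n) \sum_(j < n) polar_mx i j * u 0 i * v 0 j.

Lemma polar_linl a b (u u' v : 'rV[RR]_n) :
  polar (a *: u + b *: u') v = a * polar u v + b * polar u' v.
Proof.
rewrite /polar !mulr_sumr -big_split /=; apply: eq_bigr => i _.
rewrite !mulr_sumr -big_split /=; apply: eq_bigr => j _; rewrite !mxE /=; ring.
Qed.

Lemma polarC u v : polar u v = polar v u.
Proof.
rewrite /polar exchange_big; apply: eq_bigr => i _; apply: eq_bigr => j _.
by rewrite !mxE; ring.
Qed.

Lemma polar_diag x : polar x x = 2 * qfR x.
Proof.
have qfRT : qfR x = \sum_(i < n) \sum_(j < n) (A j i)%:~R * x 0 i * x 0 j.
  by rewrite /qfR exchange_big; apply: eq_bigr => i _; apply: eq_bigr => j _; ring.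
rewrite mulr2n mulrDl mul1r {2}qfRT /polar /qfR -big_split /=.
apply: eq_bigr => i _; rewrite -big_split /=.
by apply: eq_bigr => j _; rewrite !mxE /=; ring.
Qed.

Lemma polar_mulmx u v : polar u v = \sum_(j < n) (u *m polar_mx) 0 j * v 0 j.
Proof.
rewrite /polar exchange_big; apply: eq_bigr => j _.
by rewrite !mxE mulr_suml; apply: eq_bigr => i _; ring.
Qed.

Lemma polar0l v : polar 0 v = 0.
Proof. by rewrite polar_mulmx mul0mx big1 // => j _; rewrite mxE mul0r. Qed.

Lemma exists_polar_coord (i : 'I_n) :
  row_free polar_mx -> exists w, forall x, polar w x = x 0 i.
Proof.
move=> /row_freeP[B /mulmx1C BS]; exists (row i B) => x.
have wS : row i B *m polar_mx = row i 1%:M by rewrite -row_mul BS.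
rewrite polar_mulmx (bigD1 i) //= big1 ?addr0; first by rewrite wS !mxE eqxx mul1r.
by move=> j /negbTE ji; rewrite wS !mxE eq_sym ji mul0r.
Qed.

Hypothesis hA : posdef A.

Lemma qfR_ge0 x : 0 <= qfR x.
Proof.
have [->|x0] := eqVneq x 0; last exact/ltW/hA.
by rewrite /qfR big1 // => i _; rewrite big1 // => j _; rewrite mxE mulr0 mul0r.
Qed.

Lemma row_free_polar_mx : row_free polar_mx.
Proof.
apply: inj_row_free => v vS; apply/eqP/negPn/negP => v0.
have := hA v0; rewrite -/(qfR v).
have : polar v v = 0 by rewrite polar_mulmx vS big1 // => j _; rewrite mxE mul0r.
by rewrite polar_diag => /eqP; rewrite mulf_eq0 pnatr_eq0 /= => /eqP ->; rewrite ltxx.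
Qed.

Lemma polar_CauchySchwarz w x : polar w x ^+ 2 <= polar w w * polar x x.
Proof.
have [->|w0] := eqVneq w 0; first by rewrite !polar0l expr0n mul0r.
have apos : 0 < polar w w by rewrite polar_diag mulr_gt0 //; apply: hA.
pose a := polar w w; pose c := polar w x.
(* y := a x - c w is polar-orthogonal to w *)
have hy : 0 <= polar (a *: x + (- c) *: w) (a *: x + (- c) *: w).
  by rewrite polar_diag mulr_ge0 // qfR_ge0.
have orth : polar w (a *: x + (- c) *: w) = 0.
  by rewrite polarC polar_linl (polarC x) -/a -/c; ring.
move: hy; rewrite {1}polar_linl orth polarC polar_linl -/c -/a.
have -> : a * (a * polar x x + - c * c) + - c * 0 = a * (a * polar x x - c ^+ 2).
  by ring.
by rewrite pmulr_rge0 // subr_ge0.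
Qed.

Lemma coord_sq_le_qfR (i : 'I_n) :
  exists a : RR, forall x : 'rV[RR]_n, x 0 i ^+ 2 <= a * qfR x.
Proof.
have [w hw] := exists_polar_coord i row_free_polar_mx.
exists (polar w w * 2) => x.
by rewrite -hw -mulrA -polar_diag polar_CauchySchwarz.
Qed.

Lemma qfR_int (k : 'rV[int]_n) : qfR (map_mx intr k) = (qf A k)%:~R.
Proof.
rewrite /qfR /qf rmorph_sum; apply: eq_bigr => i _; rewrite rmorph_sum.
by apply: eq_bigr => j _; rewrite !mxE !rmorphM.
Qed.

Lemma qf_level_coord_bounded (N : int) (i : 'I_n) :
  exists M : nat, forall k, qf A k = N -> `|k 0 i| < M%:Z.
Proof.
have [a ha] := coord_sq_le_qfR i; set M := Num.Def.archi_bound `|a * N%:~R|.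
exists M => k hk.
have ksq : k 0 i ^+ 2 < M%:Z.
  rewrite -(ltr_int RR) rmorphXn /=.
  have := ha (map_mx intr k); rewrite qfR_int hk mxE => /le_lt_trans; apply.
  exact: le_lt_trans (ler_norm _) (archi_boundP _).
apply: le_lt_trans ksq; rewrite -real_normK ?num_real //.
have [->|k0] := eqVneq (k 0 i) 0; first by rewrite normr0.
by rewrite expr2 ler_peMr //; move: k0; lia.
Qed.

Lemma qf_level_finite (N : int) : finite_set [set k : 'rV[int]_n | qf A k = N].
Proof.
have [M hM] := choice (qf_level_coord_bounded N).
apply: (sub_finite_set _ (finite_int_box n (\max_(i < n) M i))) => k /= hk i.
by apply: lt_le_trans (hM i k hk) _; rewrite lez_nat (leq_bigmax i).
Qed.

End PosdefLevelSets.

Lemma big_nat_dvd_mul (V : nmodType) (d e : nat) (F : nat -> V) : (0 < d)%N ->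
  \sum_(0 <= r < e * d | (d %| r)%N) F r = \sum_(0 <= s < e) F (s * d)%N.
Proof.
move=> d0; elim: e => [|e IH]; first by rewrite mul0n !big_geq.
rewrite mulSn addnC (@big_cat_nat _ _ _ (e * d)) ?leq_addr //= IH.
rewrite big_nat_recr //=; congr (_ + _).
rewrite big_ltn_cond; last by lia.
rewrite dvdn_mull // big_nat_cond big1 ?addr0 // => r /andP[/andP[lo hi] dr].
have dB : (d %| r - e * d)%N.
  by rewrite -(dvdn_addl _ (dvdn_mull e (dvdnn d))) subnK // ltnW.
by have := dvdn_leq (_ : 0 < r - e * d)%N dB; lia.
Qed.

Lemma prim_exprz_eq1 (z : algC) (e : nat) (j : int) : e.-primitive_root z ->
  (z ^ j == 1) = (e%:Z %| j)%Z.
Proof.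
move=> pz; case: j => a; first by rewrite dvdzE /= (prim_order_dvd pz).
by rewrite NegzE -invr_expz invr_eq1 dvdzE abszN (prim_order_dvd pz).
Qed.

Lemma sum_prim_root_exprz (z : algC) (e : nat) (j : int) : e.-primitive_root z ->
  \sum_(0 <= s < e) z ^ (s%:Z * j) = if (e%:Z %| j)%Z then e%:R else 0.
Proof.
move=> pz; under eq_bigr do rewrite mulrC -exprz_exp -exprnP.
rewrite -(prim_exprz_eq1 j pz) big_mkord.
have [->|ne1] := eqVneq (z ^ j) 1.
  by rewrite (eq_bigr (fun=> 1)) ?sumr_const ?card_ord // => i _; rewrite expr1n.
move: ne1; rewrite -subr_eq0 => /mulfI; apply.
by rewrite -subrX1 mulr0 exprnP exprzAC -exprnP (prim_expr_order pz) exp1rz subrr.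
Qed.

Lemma coprime_all_primes (m r : nat) : (0 < m)%N ->
  coprime r m = all (fun p => ~~ (p %| r)%N) (primes m).
Proof.
move=> m0; have [->|r0] := posnP r.
  rewrite /coprime gcd0n; case: (ltngtP m 1) => [|m1|->] //; first by lia.
  have pm : pdiv m \in primes m by rewrite mem_primes pdiv_prime // m0 pdiv_dvd.
  by apply/esym/negbTE/allPn; exists (pdiv m); rewrite ?dvdn0.
rewrite coprime_has_primes // -all_predC; apply: eq_in_all => p.
by rewrite mem_primes => /and3P[pp _ _] /=; rewrite mem_primes pp r0.
Qed.

(* Inclusion-exclusion: [p does not divide r] = 1 - [p | r], and a product of
   divisibility indicators is the indicator of divisibility by the lcm. *)
Lemma all_ndvd_lincomb (m : nat) (ps : seq nat) : all (dvdn^~ m) ps ->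
  exists s : seq (int * nat), all (fun cd => (cd.2 %| m)%N) s /\
   forall r : nat, (all (fun p => ~~ (p %| r)%N) ps)%:R
     = \sum_(cd <- s) cd.1%:~R * ((cd.2 %| r)%N)%:R :> algC.
Proof.
elim: ps => [_|p ps IH /= /andP[pm /IH[s [sm e]]]].
  by exists [:: (1, 1%N)]; split => [|r]; rewrite /= ?dvd1n // big_seq1 /= dvd1n mulr1.
exists (s ++ [seq (- cd.1, lcmn p cd.2) | cd <- s]); split.
  rewrite all_cat sm /= all_map; apply/allP => cd cds /=.
  by rewrite dvdn_lcm pm (allP sm cd cds).
move=> r; rewrite big_cat big_map /=.
have -> : \sum_(cd <- s) (- cd.1)%:~R * ((lcmn p cd.2 %| r)%N)%:R
   = - ((p %| r)%N%:R * \sum_(cd <- s) cd.1%:~R * ((cd.2 %| r)%N)%:R) :> algC.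
  rewrite mulr_sumr -sumrN; apply: eq_bigr => cd _.
  by rewrite dvdn_lcm mulrNz; case: (p %| r)%N; case: (cd.2 %| r)%N => /=; ring.
by rewrite -e; case: (p %| r)%N; rewrite /= ?mul0r ?mul1r ?oppr0 ?addr0 ?subrr.
Qed.

Lemma ramanujan_sum_lincomb (m : nat) (z : algC) : m.-primitive_root z ->
  exists s : seq (int * nat), all (fun ce => (0 < ce.2)%N) s /\ forall j : int,
  \sum_(0 <= r < m | coprime r m) z ^ (r%:Z * j)
  = \sum_(ce <- s) ce.1%:~R * (if (ce.2%:Z %| j)%Z then ce.2%:R else 0).
Proof.
move=> pz; have m0 := prim_order_gt0 pz.
have pm : all (dvdn^~ m) (primes m).
  by apply/allP => p; rewrite mem_primes => /and3P[].
have [s [sm e]] := all_ndvd_lincomb pm.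
exists [seq (cd.1, m %/ cd.2)%N | cd <- s]; split.
  rewrite all_map; apply/allP => cd /(allP sm) dm /=.
  by rewrite divn_gt0 ?(dvdn_gt0 m0 dm) // dvdn_leq.
move=> j; rewrite big_map big_mkcond /=.
under eq_bigr => r _ do rewrite -mulrb (coprime_all_primes r m0) -mulr_natl e mulr_suml.
rewrite exchange_big /=; apply: eq_big_seq => cd /(allP sm) dm.
have d0 := dvdn_gt0 m0 dm.
under eq_bigr => r _ do rewrite -mulrA mulr_natl mulrb.
rewrite -mulr_sumr -big_mkcond /=; congr (_ * _).
rewrite -{1}(divnK dm) big_nat_dvd_mul //.
have pzd : (m %/ cd.2)%N.-primitive_root (z ^+ cd.2).
  have := dvdn_prim_root pz (dvdn_div dm).
  have -> // : (m %/ (m %/ cd.2))%N = cd.2.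
  by rewrite -{1}(divnK dm) mulKn // divn_gt0 // dvdn_leq.
rewrite -(sum_prim_root_exprz _ pzd); apply: eq_bigr => s0 _.
by rewrite -[z ^+ cd.2]/(z ^ (cd.2 : int)) exprz_exp PoszM; congr (_ ^ _); ring.
Qed.

Lemma avg_coprime (m : nat) (F : nat -> algC) (c : algC) :
  (0 < m)%N -> (forall r, coprime r m -> F r = c) ->
  c = (totient m)%:R^-1 * \sum_(0 <= r < m | coprime r m) F r.
Proof.
move=> m0 Fc; rewrite (eq_bigr (fun=> c)) // big_mkcond /=.
under eq_bigr do rewrite -mulrb.
rewrite sumrMnr.
have -> : \sum_(0 <= r < m) (coprime r m : nat) = totient m.
  by rewrite totient_count_coprime; apply: eq_bigr => r _; rewrite coprime_sym.
by rewrite -[c *+ _]mulr_natl mulrA mulVf ?mul1r // pnatr_eq0 -lt0n totient_gt0.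
Qed.

Section RescaleCoord.
Variables (n : nat) (i0 : 'I_n) (e : nat).

Definition rescale_coef (i : 'I_n) : int := if i == i0 then e%:Z else 1.

Definition rescale_mx (A : 'M[int]_n) : 'M[int]_n :=
  \matrix_(i, j) (A i j * rescale_coef i * rescale_coef j).

Definition rescale_row (k : 'rV[int]_n) : 'rV[int]_n :=
  \row_i (k 0 i * rescale_coef i).

Lemma qf_rescale_mx A k : qf (rescale_mx A) k = qf A (rescale_row k).
Proof. by apply: eq_bigr => i _; apply: eq_bigr => j _; rewrite !mxE; ring. Qed.

Hypothesis e_gt0 : (0 < e)%N.

Lemma rescale_coef_neq0 i : rescale_coef i != 0.
Proof. by rewrite /rescale_coef; case: ifP; rewrite // eqz_nat -lt0n. Qed.

Lemma posdef_rescale_mx A : posdef A -> posdef (rescale_mx A).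
Proof.
move=> hA x x0; pose x' := \row_i (x 0 i * (rescale_coef i)%:~R).
have x'0 : x' != 0.
  apply: contra x0 => /eqP/rowP x'0; apply/eqP/rowP => i; move: (x'0 i).
  by rewrite !mxE => /eqP; rewrite mulf_eq0 intr_eq0 (negbTE (rescale_coef_neq0 i)) orbF => /eqP.
have := hA x' x'0; congr (_ < _).
by apply: eq_bigr => i _; apply: eq_bigr => j _; rewrite !mxE !intrM; ring.
Qed.

Lemma rescale_row_inj : injective rescale_row.
Proof.
move=> k k' /rowP kk'; apply/rowP => i; move: (kk' i); rewrite !mxE => /eqP.
by rewrite -subr_eq0 -mulrBl mulf_eq0 (negbTE (rescale_coef_neq0 i)) orbF subr_eq0 => /eqP.
Qed.

Lemma theta_coef_rescale_mx A N :
  theta_coef (rescale_mx A) i0 1 N =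
  \sum_(k \in [set k : 'rV[int]_n | qf A k = N%:Z])
     (if (e%:Z %| k 0%R i0)%Z then 1 else 0 : algC).
Proof.
rewrite /theta_coef; under eq_fsbigr do rewrite exp1rz.
transitivity (\sum_(k \in [set k : 'rV[int]_n | qf A k = N%:Z] `&`
                        [set k | (e%:Z %| k 0%R i0)%Z]) (1 : algC)); last first.
  by rewrite fsbig_mkcondr; apply: eq_fsbigr => k _; rewrite mem_setE.
apply/esym/(reindex_fsbig rescale_row); split.
- move=> k /= hk; rewrite -qf_rescale_mx; split => //=.
  by rewrite mxE /rescale_coef eqxx dvdz_mull.
- by move=> k k' _ _; apply: rescale_row_inj.
- move=> k [/= hk ek]; set k' := \row_i (if i == i0 then (k 0%R i0 %/ e%:Z)%Z else k 0 i).
  have kE : rescale_row k' = k.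
    by apply/rowP => i; rewrite !mxE /rescale_coef; case: eqP => [->|]; rewrite ?divzK ?mulr1.
  by exists k'; rewrite //= qf_rescale_mx kE.
Qed.

End RescaleCoord.

Lemma theta_coef_coprime_invariant_lincomb (n m : nat) (i0 : 'I_n)
    (A : 'M[int]_n) (z : algC) :
  posdef A -> m.-primitive_root z ->
  (forall r, coprime r m -> forall N, theta_coef A i0 (z ^+ r) N = theta_coef A i0 z N) ->
  exists s : seq (rat * 'M[int]_n),
    (forall p, p \in s -> posdef p.2) /\
    forall N : nat, theta_coef A i0 z N = \sum_(p <- s) ratr p.1 * theta_coef p.2 i0 1 N.
Proof.
move=> hA pz zinv; have m0 := prim_order_gt0 pz.
have [s [s_gt0 ramanujan]] := ramanujan_sum_lincomb pz.
exists [seq ((ce.1 * ce.2%:Z)%:~R / (totient m)%:R, rescale_mx i0 ce.2 A) | ce <- s].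
split=> [_ /mapP[ce /(allP s_gt0) ce_gt0 ->]|N]; first exact: posdef_rescale_mx.
set S := [set k : 'rV[int]_n | qf A k = N%:Z].
have Sfin : finite_set S := qf_level_finite hA N%:Z.
have thetaE r : theta_coef A i0 (z ^+ r) N =
    \sum_(k <- finmap.enum_fset (fset_set S)) z ^ (r%:Z * k 0 i0).
  by rewrite /theta_coef (fsbig_finite _ _ Sfin); apply: eq_bigr => k _; rewrite -exprz_exp.
rewrite (avg_coprime m0 (fun r cr => zinv r cr N)) big_map.
rewrite (eq_bigr _ (fun r _ => thetaE r)).
rewrite exchange_big /=; under eq_bigr do rewrite ramanujan.
rewrite exchange_big /= mulr_sumr; apply: eq_big_seq => ce /(allP s_gt0) ce_gt0.
rewrite theta_coef_rescale_mx // (fsbig_finite _ _ Sfin) !mulr_sumr.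
apply: eq_bigr => k _; rewrite fmorph_div rmorph_int rmorph_nat /= intrM.
by case: ifP => _; rewrite ?mulr0 //; ring.
Qed.

Theorem proposition3p2 (n m : nat) (hn : (0 < n)%N) (hm : (0 < m)%N)
  (A : 'M[int]_n) (hA : posdef A) :
  (forall (g : {rmorphism algC -> algC}) (N : nat),
      theta_coef A (Ordinal hn) (g (xi m)) N = theta_coef A (Ordinal hn) (xi m) N) ->
  exists s : seq (rat * 'M[int]_n),
    (forall p, p \in s -> posdef p.2) /\
    forall N : nat,
      theta_coef A (Ordinal hn) (xi m) N
      = \sum_(p <- s) ratr p.1 * theta_coef p.2 (Ordinal hn) 1 N.
Proof.
move=> xi_inv.
have xi_m : xi m ^+ m = 1 by rewrite /xi exprAC rootCK // sqrrN expr1n.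
have [m' pz _] := prim_order_exists hm xi_m.
apply: (theta_coef_coprime_invariant_lincomb hA pz) => r cop N.
have [u uE] := Qn_aut_exists cop.
by rewrite -(uE (xi m) (prim_expr_order pz)) xi_inv.
Qed.
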